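(* Let $B$ be a nonzero real vector space and $\lfloor\cdot,\cdot\rfloor\colon B\times B\to\mathbb{R}$ a symmetric bilinear form, and put $q(b):=\tfrac12\lfloor b,b\rfloor$. Let $f\colon B\to\,]{-}\infty,\infty]$ be proper and convex with $f\ge q$ on $B$. Then $f^@=q$ on ${\cal P}_q(f)$.
   Context: Here $f^@$ is the Fenchel conjugate of $f$ with respect to $\lfloor\cdot,\cdot\rfloor$: $f^@(c):=\sup_{b\in B}\big[\lfloor b,c\rfloor-f(b)\big]$ for $c\in B$. For $f\ge q$, ${\cal P}_q(f):=\{b\in B\colon f(b)=q(b)\}$. ''Proper'' means $f$ is not identically $\infty$. *)

From HB Require Import structures.
From mathcomp Require Import all_boot all_order all_algebra.
From mathcomp Require Import all_classical all_reals ereal.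
Set Implicit Arguments. Unset Strict Implicit. Unset Printing Implicit Defensive.
Import Order.TTheory GRing.Theory Num.Theory.
Local Open Scope ring_scope.
Local Open Scope classical_set_scope.

Definition symmetric_bilinear (R : realType) (B : lmodType R) (bf : B -> B -> R) :=
  (forall (a : R) (x y z : B), bf (a *: x + y) z = a * bf x z + bf y z) /\
  (forall x y : B, bf x y = bf y x).

Definition qform (R : realType) (B : lmodType R) (bf : B -> B -> R) (b : B) : R :=
  bf b b / 2.

Definition proper_fun (R : realType) (B : lmodType R) (f : B -> \bar R) :=
  (forall b, f b != -oo%E) /\ (exists b, f b != +oo%E).

Definition convex_efun (R : realType) (B : lmodType R) (f : B -> \bar R) :=
  forall (x y : B) (t : R), 0 < t < 1 ->
    (f (t *: x + (1 - t) *: y)%R <= t%:E * f x + (1 - t)%:E * f y)%E.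

Definition fconj (R : realType) (B : lmodType R) (bf : B -> B -> R)
  (f : B -> \bar R) (c : B) : \bar R :=
  ereal_sup [set ((bf b c)%:E - f b)%E | b in [set: B]].

Definition Pq (R : realType) (B : lmodType R) (bf : B -> B -> R)
  (f : B -> \bar R) : set B := [set b | f b = (qform bf b)%:E].

(* Let f(b) = q(b) and c in B with f(c) < oo.  Convexity of f and f >= q along the
   segment from b to c give, for 0 < t < 1,
     q(b) + t([c,b] - [b,b]) + t^2 q(c - b) <= f(b + t(c - b)) <= t f(c) + (1 - t) q(b).
   Dividing by t and letting t -> 0 yields [c,b] - f(c) <= [b,b] - q(b) = q(b), so
   f^@(b) <= q(b); the reverse inequality is the term c = b of the supremum. *)

From HB Require Import structures.
From mathcomp Require Import all_boot all_order all_algebra.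
From mathcomp Require Import all_classical all_reals ereal.
From mathcomp Require Import ring lra.
Import Order.TTheory GRing.Theory Num.Theory.
Local Open Scope ring_scope.
Local Open Scope classical_set_scope.

Lemma ler_of_lerD_vanishing (R : realFieldType) (x y K : R) :
  (forall t, 0 < t < 1 -> x <= y + t * K) -> x <= y.
Proof.
move=> hxy; apply/ler_addgt0Pr => e e0.
have d0 : 0 < e + `|K| + 1 by have := normr_ge0 K; lra.
set t := e / (e + `|K| + 1).
have t0 : 0 < t by rewrite divr_gt0.
have td : t * (e + `|K| + 1) = e by rewrite mulfVK // gt_eqF.
have t1 : t < 1 by rewrite /t ltr_pdivrMr // mul1r; have := normr_ge0 K; lra.
have tK : t * K <= e by have := ler_norm K; nra.
by have := hxy t; rewrite t0 t1 /= => /(_ isT); lra.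
Qed.

Section SymmetricBilinear.
Variables (R : realType) (B : lmodType R) (bf : B -> B -> R).
Hypothesis bf_symbil : symmetric_bilinear bf.

Let bf_linl a x y z : bf (a *: x + y) z = a * bf x z + bf y z.
Proof. by case: bf_symbil. Qed.

Let bfC x y : bf x y = bf y x.
Proof. by case: bf_symbil. Qed.

Lemma bf0l z : bf 0 z = 0.
Proof. by have := bf_linl 1 0 0 z; rewrite scale1r addr0 mul1r; lra. Qed.

Lemma bfZl a x z : bf (a *: x) z = a * bf x z.
Proof. by rewrite -[a *: x]addr0 bf_linl bf0l addr0. Qed.

Lemma bfDl x y z : bf (x + y) z = bf x z + bf y z.
Proof. by rewrite -[x in x + y]scale1r bf_linl mul1r. Qed.

Lemma bfZr a x z : bf z (a *: x) = a * bf z x.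
Proof. by rewrite bfC bfZl bfC. Qed.

Lemma bfDr x y z : bf z (x + y) = bf z x + bf z y.
Proof. by rewrite bfC bfDl !(bfC z). Qed.

Lemma qform_segment (b c : B) (t : R) :
  qform bf (t *: c + (1 - t) *: b) =
  qform bf b + t * (bf c b - bf b b) + t ^+ 2 * qform bf (c - b).
Proof.
rewrite /qform !(bfDl, bfZl, bfDr, bfZr) -scaleN1r !(bfZl, bfZr) [bf b c]bfC.
by field.
Qed.

Lemma fconj_ge (f : B -> \bar R) (b c : B) :
  ((bf c b)%:E - f c <= fconj bf f b)%E.
Proof. by apply: ereal_sup_ubound; exists c. Qed.

Lemma fconj_le_qform (f : B -> \bar R) (b : B) :
  (forall c, f c != -oo%E) -> convex_efun f ->
  (forall c, ((qform bf c)%:E <= f c)%E) ->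
  f b = (qform bf b)%:E -> (fconj bf f b <= (qform bf b)%:E)%E.
Proof.
move=> fNoo fcvx fq fb; apply: ge_ereal_sup => _ [c _ <-].
case fc: (f c) => [r| |]; first last.
- by have := fNoo c; rewrite fc.
- by rewrite addeNy leNye.
rewrite -EFinB lee_fin.
suff : bf c b - bf b b <= r - qform bf b by rewrite /qform; lra.
apply: (@ler_of_lerD_vanishing _ _ _ (- qform bf (c - b))) => t /andP[t0 t1].
have := le_trans (fq _) (fcvx c b t _); rewrite t0 t1 fc fb => /(_ isT).
rewrite -!EFinM -EFinD lee_fin qform_segment => hseg.
have : t * (bf c b - bf b b) <= t * (r - qform bf b + t * - qform bf (c - b)).
  by move: hseg; rewrite expr2; lra.
by rewrite ler_pM2l.
Qed.

End SymmetricBilinear.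

Theorem lemma3p7 (R : realType) (B : lmodType R) (bf : B -> B -> R)
  (f : B -> \bar R) :
  (exists b0 : B, b0 != 0) ->
  symmetric_bilinear bf ->
  proper_fun f ->
  convex_efun f ->
  (forall b, ((qform bf b)%:E <= f b)%E) ->
  forall b, b \in Pq bf f -> fconj bf f b = (qform bf b)%:E.
Proof.
move=> _ bf_symbil [fNoo _] fcvx fq b; rewrite inE /Pq /= => fb.
apply/le_anti/andP; split; first exact: fconj_le_qform.
apply: le_trans (@fconj_ge _ _ bf f b b).
by rewrite fb -EFinB lee_fin /qform; lra.
Qed.
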